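(* Let $N\ge0$ be an integer, let $\epsilon_1,\dots,\epsilon_N$ be i.i.d. Rademacher variables, and let $E=\sum_{i=1}^N\epsilon_i$ (so $E$ has the law of $2\,\mathrm{Binom}(N,\tfrac12)-N$). Then for every $b>1$, $$\mathbb E\big[\max\{E-\tfrac1bN,0\}\big]\le\frac{1-\frac1b}{e\cdot D\big(\frac{1+1/b}{2}\,\big\|\,\frac12\big)}.$$
   Context: $D(p\|q)=p\log\frac pq+(1-p)\log\frac{1-p}{1-q}$ is the binary Kullback–Leibler divergence. *)

From HB Require Import structures.
From mathcomp Require Import all_boot all_order all_algebra.
From mathcomp Require Import all_classical all_reals.
From mathcomp Require Import all_analysis.
Set Implicit Arguments. Unset Strict Implicit. Unset Printing Implicit Defensive.
Import Order.TTheory GRing.Theory Num.Theory.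
Local Open Scope ring_scope.

Definition binKL (R : realType) (p q : R) : R :=
  p * ln (p / q) + (1 - p) * ln ((1 - p) / (1 - q)).

Definition rad (R : realType) (s : bool) : R := if s then 1 else -1.

Definition radSum (R : realType) (N : nat) (s : {ffun 'I_N -> bool}) : R :=
  \sum_(i < N) rad R (s i).

(* Expectation w.r.t. the uniform probability on {+-1}^N, i.e. i.i.d. Rademacher. *)
Definition radExpect (R : realType) (N : nat) (f : {ffun 'I_N -> bool} -> R) : R :=
  (2 ^+ N)^-1 * \sum_(s : {ffun 'I_N -> bool}) f s.

From Pilot Require Import Defs.
From HB Require Import structures.
From mathcomp Require Import all_boot all_order all_algebra.
From mathcomp Require Import all_classical all_reals.
From mathcomp Require Import all_analysis.
From mathcomp Require Import ring lra.
Import Order.TTheory GRing.Theory Num.Theory.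
Local Open Scope ring_scope.

(* Write a = 1/b.  The proof is an exponential Markov (Chernoff) argument:
   max(x, 0) <= e^{lx}/(e l) for every l > 0, and E[e^{l(E - aN)}] factors
   as the N-th power of (e^{l(1-a)} + e^{-l(1+a)})/2.  Any tilt l > 0 making
   this one-step factor at most 1 therefore bounds the expectation by 1/(e l).
   We take l = ln(1+a)/(1-a): then e^{l(1-a)} = 1+a, and e^{-l(1+a)} <= 1-a is
   equivalent to (1+a) ln(1+a) + (1-a) ln(1-a) = 2 D >= 0 (Gibbs' inequality).
   Finally l >= D/(1-a) since D <= ln(1+a), which turns 1/(e l) into the
   claimed bound. *)

Section RademacherTail.
Context {R : realType}.

Lemma ln_lt_subr1 {x : R} : 0 < x -> x != 1 -> ln x < x - 1.
Proof.
move=> x0 x1; have lnx0 : ln x != 0 by rewrite ln_eq0.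
by rewrite ltrBrDl -[X in _ < X](lnK (x := x)) ?posrE // expR_gt1Dx.
Qed.

(* The pointwise Gibbs bound x ln(x/y) >= x - y, strict when x != y; it is
   the tangent-line bound applied to y/x. *)
Lemma sub_lt_mul_ln_ratio {x y : R} : 0 < x -> 0 < y -> x != y ->
  x - y < x * ln (x / y).
Proof.
move=> x0 y0 xy; rewrite -invf_div lnV ?posrE ?divr_gt0 // mulrN ltrNr opprB.
have := ltr_pM2l x0 (ln (y / x)) (y / x - 1).
rewrite mulrBr mulr1 mulrCA divff ?gt_eqF // mulr1 => ->.
apply: ln_lt_subr1; first exact: divr_gt0.
by rewrite -(inj_eq (mulIf (lt0r_neq0 x0))) mul1r (divfK (lt0r_neq0 x0)) eq_sym.
Qed.

Lemma sub_le_mul_ln_ratio {x y : R} : 0 < x -> 0 < y -> x - y <= x * ln (x / y).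
Proof.
move=> x0 y0; have [<-|xy] := eqVneq x y.
  by rewrite subrr divff ?lt0r_neq0 // ln1 mulr0.
exact/ltW/sub_lt_mul_ln_ratio.
Qed.

Lemma binKL_gt0 (p q : R) : 0 < p < 1 -> 0 < q < 1 -> p != q -> 0 < binKL p q.
Proof.
move=> /andP[p0 p1] /andP[q0 q1] pq.
have first_term := sub_lt_mul_ln_ratio p0 q0 pq.
have second_term : (1 - p) - (1 - q) <= (1 - p) * ln ((1 - p) / (1 - q)).
  by apply: sub_le_mul_ln_ratio; rewrite subr_gt0.
rewrite /binKL; lra.
Qed.

Lemma binKL_half (a : R) :
  binKL ((1 + a) / 2) (1 / 2) = ((1 + a) * ln (1 + a) + (1 - a) * ln (1 - a)) / 2.
Proof.
rewrite /binKL.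
have -> : (1 + a) / 2 / (1 / 2) = 1 + a by field.
have -> : (1 - (1 + a) / 2) / (1 - 1 / 2) = 1 - a by field.
by field.
Qed.

Lemma max0_le_expR {l : R} (x : R) : 0 < l ->
  Num.max x 0 <= expR (l * x) / (expR 1 * l).
Proof.
move=> l0; have el : 0 < expR 1 * l by rewrite mulr_gt0 // expR_gt0.
rewrite ge_max (divr_ge0 (expR_ge0 _) (ltW el)) andbT ler_pdivlMr //.
have tangent := expR_ge1Dx (l * x - 1); rewrite addrC subrK in tangent.
have -> : x * (expR 1 * l) = l * x * expR 1 by ring.
have -> : expR (l * x) = expR (l * x - 1) * expR 1 by rewrite -expRD subrK.
by rewrite ler_pM2r ?expR_gt0.
Qed.

(* Moment generating function of the centred sum: the 2^N sample points
   factor coordinatewise. *)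
Lemma sum_expR_radSum (N : nat) (l a : R) :
  \sum_(s : {ffun 'I_N -> bool}) expR (l * (@radSum R N s - a * N%:R))
  = (expR (l * (1 - a)) + expR (l * (-1 - a))) ^+ N.
Proof.
have -> : (expR (l * (1 - a)) + expR (l * (-1 - a))) ^+ N
   = \prod_(i < N) \sum_(j : bool) expR (l * (Defs.rad R j - a)).
  by rewrite prodr_const card_ord big_bool /= addrC.
rewrite bigA_distr_bigA; apply: eq_bigr => s _.
by rewrite -expR_sum -mulr_sumr sumrB sumr_const card_ord mulr_natr.
Qed.

Lemma radExpect_pos_part_le (N : nat) {a l : R} : 0 < l ->
  expR (l * (1 - a)) + expR (l * (-1 - a)) <= 2 ->
  radExpect (fun s => Num.max (@radSum R N s - a * N%:R) 0) <= (expR 1 * l)^-1.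
Proof.
move=> l0 mgf_le2; rewrite /radExpect.
have el : 0 < expR 1 * l by rewrite mulr_gt0 // expR_gt0.
have pow2N : 0 < (2 : R) ^+ N by rewrite exprn_gt0.
apply: (@le_trans _ _ ((2 ^+ N)^-1 * \sum_(s : {ffun 'I_N -> bool})
    expR (l * (@radSum R N s - a * N%:R)) / (expR 1 * l))).
  by rewrite ler_pM2l ?invr_gt0 //; apply: ler_sum => s _; exact: max0_le_expR.
rewrite -mulr_suml sum_expR_radSum mulrA; apply: ler_piMl.
  by rewrite invr_ge0 ltW.
by rewrite mulrC ler_pdivrMr // mul1r lerXn2r ?nnegrE ?addr_ge0 ?expR_ge0.
Qed.

(* The tilt l = ln(1+a)/(1-a): the one for which e^{l(1-a)} = 1+a exactly. *)
Definition tilt (a : R) : R := ln (1 + a) / (1 - a).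

Lemma binKL_half_gt0 {a : R} : a != 0 -> -1 < a < 1 ->
  0 < binKL ((1 + a) / 2) (1 / 2).
Proof.
move=> a0 /andP[a_gtN1 a_lt1]; apply: binKL_gt0.
- by apply/andP; split; lra.
- by apply/andP; split; lra.
- by apply: contra a0 => /eqP half_eq; apply/eqP; lra.
Qed.

(* With this tilt the moment generating condition of the Chernoff bound
   reduces exactly to D((1+a)/2 || 1/2) >= 0. *)
Lemma tilt_mgf_le2 {a : R} : 0 < a < 1 ->
  expR (tilt a * (1 - a)) + expR (tilt a * (-1 - a)) <= 2.
Proof.
move=> /andP[a0 a1]; have pos1Ba : 0 < 1 - a by rewrite subr_gt0.
have pos1Da : 0 < 1 + a by rewrite addr_gt0.
have a_range : -1 < a < 1 by rewrite a1 (lt_trans (ltrN10 R) a0).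
have := binKL_half_gt0 (lt0r_neq0 a0) a_range; rewrite binKL_half => D0.
rewrite /tilt divfK ?lt0r_neq0 // lnK ?posrE //.
suff : expR (ln (1 + a) / (1 - a) * (-1 - a)) <= 1 - a by lra.
rewrite -[X in _ <= X]lnK ?posrE // ler_expR mulrAC ler_pdivrMr //.
have -> : ln (1 + a) * (-1 - a) = - ((1 + a) * ln (1 + a)) by ring.
lra.
Qed.

(* The tilt dominates D/(1-a), because ln(1-a) <= ln(1+a). *)
Lemma binKL_half_le_tilt {a : R} : 0 < a < 1 ->
  binKL ((1 + a) / 2) (1 / 2) / (1 - a) <= tilt a.
Proof.
move=> /andP[a0 a1]; have pos1Ba : 0 < 1 - a by rewrite subr_gt0.
rewrite /tilt ler_pM2r ?invr_gt0 // binKL_half.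
have ln_le : ln (1 - a) <= ln (1 + a) by rewrite ler_ln ?posrE; lra.
have := ler_wpM2l (ltW pos1Ba) ln_le; lra.
Qed.

End RademacherTail.

Theorem lemma5 (R : realType) (N : nat) (b : R) (hb : 1 < b) :
  @radExpect R N (fun s => Num.max (@radSum R N s - b^-1 * N%:R) 0)
  <= (1 - b^-1) / (expR 1 * binKL ((1 + b^-1) / 2) (1 / 2)).
Proof.
set a := b^-1; set D := binKL _ _.
have a0 : 0 < a by rewrite invr_gt0 (lt_trans ltr01 hb).
have a1 : a < 1 by rewrite invf_lt1 // (lt_trans ltr01 hb).
have a01 : 0 < a < 1 by rewrite a0 a1.
have pos1Ba : 0 < 1 - a by rewrite subr_gt0.
have a_range : -1 < a < 1 by rewrite a1 (lt_trans (ltrN10 R) a0).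
have D0 : 0 < D := binKL_half_gt0 (lt0r_neq0 a0) a_range.
have D_le_tilt : D / (1 - a) <= tilt a := binKL_half_le_tilt a01.
have tilt0 : 0 < tilt a by apply: lt_le_trans D_le_tilt; exact: divr_gt0.
apply: le_trans (radExpect_pos_part_le N tilt0 (tilt_mgf_le2 a01)) _.
have -> : (1 - a) / (expR 1 * D) = (expR 1 * (D / (1 - a)))^-1.
  by field; rewrite !lt0r_neq0 ?expR_gt0.
have e0 := expR_gt0 (1 : R).
rewrite lef_pV2 ?posrE ?(mulr_gt0 e0) ?(divr_gt0 D0) //.
by rewrite ler_pM2l.
Qed.
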